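(* Let $F$ be a hyperfield and let $p$ be a polynomial over $F$ of degree $2$ or $3$. Then $p$ is irreducible if and only if $p$ has no root in $F$.
   Context: A hyperfield is a set $F$ with a commutative multiplication and a multivalued addition $\boxplus:F\times F\to\mathcal P(F)$ such that: there are unique $0,1\in F$ with $(F,\cdot,1)$ a commutative monoid and $F\setminus\{0\}$ a group; $ab\boxplus ac=\{ad: d\in b\boxplus c\}$; and $(F,\boxplus,0)$ is a commutative hypergroup (with additive inverses $-a$, $0\in a\boxplus(-a)$). Iterated sums: $\boxplus_{i=1}^n a_i=\bigcup_{b\in\boxplus_{i=1}^{n-1}a_i} b\boxplus a_n$. A polynomial over $F$ is a finitely supported sequence $(c_i)$ in $F$, written $\sum c_iT^i$, with degree the largest $k$ with $c_k\ne0$. Hyperproduct: $p\boxdot q=\{\sum e_iT^i : e_i\in \boxplus_{k+l=i} c_kd_l\}$. $p\sim q$ means $p\in a\boxdot q$ for some nonzero $a\in F$; $p$ is irreducible if $\deg p\ge1$ and $p\in q_1\boxdot q_2$ implies $p\sim q_1$ or $p\sim q_2$. An element $a\in F$ is a root of $p=\sum c_iT^i$ if $0\in\boxplus_i c_ia^i$. (Known fact used freely: $a$ is a root of $p$ iff $p\in(T-a)\boxdot q$ for some polynomial $q$.) *)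

From Stdlib Require Import List Arith.
Import ListNotations.
Set Implicit Arguments.

(* A hyperfield.  [hadd a b x] means  x \in a ⊞ b. *)
Record Hyperfield := {
  car :> Type;
  hzero : car;
  hone : car;
  hmul : car -> car -> car;
  hadd : car -> car -> car -> Prop;
  hneg : car -> car;
  hmul_comm : forall a b, hmul a b = hmul b a;
  hmul_assoc : forall a b c, hmul a (hmul b c) = hmul (hmul a b) c;
  hmul_1l : forall a, hmul hone a = a;
  hmul_0l : forall a, hmul hzero a = hzero;
  hzero_neq_one : hzero <> hone;
  hmul_inv : forall a, a <> hzero -> exists b, hmul a b = hone;
  hdistr : forall a b c x,
      hadd (hmul a b) (hmul a c) x <-> exists d, hadd b c d /\ x = hmul a d;
  hadd_nonempty : forall a b, exists x, hadd a b x;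
  hadd_comm : forall a b x, hadd a b x <-> hadd b a x;
  hadd_assoc : forall a b c x,
      (exists y, hadd a b y /\ hadd y c x) <-> (exists y, hadd b c y /\ hadd a y x);
  hadd_0r : forall a x, hadd a hzero x <-> x = a;
  hadd_neg : forall a, hadd a (hneg a) hzero;
  hneg_unique : forall a b, hadd a b hzero -> b = hneg a;
  hadd_reversible : forall a b c, hadd a b c -> hadd c (hneg b) a
}.

Section Hyper.
Variable F : Hyperfield.

Fixpoint hpow (a : F) (n : nat) : F :=
  match n with 0 => hone F | S m => hmul F (hpow a m) a end.

Fixpoint hsum_aux (S : F -> Prop) (l : list F) : F -> Prop :=
  match l with
  | [] => S
  | a :: l' => hsum_aux (fun x => exists b, S b /\ hadd F b a x) l'
  end.

Definition hsum (l : list F) : F -> Prop :=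
  match l with
  | [] => fun x => x = hzero F
  | a :: l' => hsum_aux (fun x => x = a) l'
  end.

Record hpoly := HPoly {
  coef : nat -> F;
  coef_fin : exists N, forall i, N <= i -> coef i = hzero F
}.

Definition has_degree (p : hpoly) (k : nat) : Prop :=
  coef p k <> hzero F /\ forall i, k < i -> coef p i = hzero F.

Definition in_hprod (e p q : hpoly) : Prop :=
  forall i, hsum (map (fun k => hmul F (coef p k) (coef q (i - k))) (seq 0 (S i)))
                 (coef e i).

Definition hconst (a : F) : hpoly.
Proof.
  refine (HPoly (fun i => match i with 0 => a | _ => hzero F end) _).
  exists 1; intros [|i] H; [inversion H | reflexivity].
Defined.

Definition hassoc (p q : hpoly) : Prop :=
  exists a, a <> hzero F /\ in_hprod p (hconst a) q.

Definition hirreducible (p : hpoly) : Prop :=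
  (exists k, 1 <= k /\ has_degree p k) /\
  forall q1 q2 : hpoly, in_hprod p q1 q2 -> hassoc p q1 \/ hassoc p q2.

Definition is_root (p : hpoly) (a : F) : Prop :=
  exists N, (forall i, N <= i -> coef p i = hzero F) /\
    hsum (map (fun i => hmul F (coef p i) (hpow a i)) (seq 0 N)) (hzero F).

End Hyper.

(* Let p have degree n.  Two facts about hyperproducts drive the proof:
   degrees add (deg p = deg q1 + deg q2 whenever p ∈ q1 ⊡ q2), and a
   product with a factor of degree at most one, f0 + f1 T, is described
   coefficientwise by the recursion  c_0 = f0 r_0,
   c_(i+1) ∈ f0 r_(i+1) ⊞ f1 r_i  ([lin_rec]).

   Roots are characterised by "evaluation chains": a is a root of p iff
   there is a sequence s with s_0 = c_0, s_(i+1) ∈ s_i ⊞ c_(i+1) a^(i+1)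
   and s eventually 0 ([root_chain]).  From such a chain one reads off a
   factorisation p ∈ (T - a) ⊡ q, and conversely the recursion for
   p ∈ (f0 + f1 T) ⊡ r with f1 ≠ 0 yields a chain for a = -f0/f1.

   Hence (i) for n ≥ 2 a root gives a factor T - a of degree 1 < n and a
   cofactor of degree n - 1 < n, neither associate to p, so p is
   reducible; (ii) for n ≤ 3 any factorisation p ∈ q1 ⊡ q2 has a factor
   of degree ≤ 1, which is either a unit (the other factor is associate
   to p) or linear (p has a root). *)

From Stdlib Require Import List Arith Lia Classical.
Import ListNotations.
Set Implicit Arguments.

Section HyperfieldPolynomials.

Variable F : Hyperfield.

Local Notation zero := (hzero F).
Local Notation one := (hone F).
Local Infix "⋅" := (hmul F) (at level 40, left associativity).
Local Notation "- a" := (hneg F a).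
Local Notation "x ∈ a ⊞ b" := (hadd F a b x) (at level 70, a at level 50, b at level 50).

Lemma hmul_1r (a : F) : a ⋅ one = a.
Proof. rewrite hmul_comm; apply hmul_1l. Qed.

Lemma hmul_0r (a : F) : a ⋅ zero = zero.
Proof. rewrite hmul_comm; apply hmul_0l. Qed.

Lemma hadd_0l (a x : F) : x ∈ zero ⊞ a <-> x = a.
Proof. rewrite hadd_comm; apply hadd_0r. Qed.

Lemma hneg_0 : - zero = zero.
Proof. symmetry; apply hneg_unique, hadd_0r; reflexivity. Qed.

Lemma hneg_involutive (a : F) : - - a = a.
Proof. symmetry; apply hneg_unique, hadd_comm, hadd_neg. Qed.

Lemma hmul_negr (a b : F) : a ⋅ - b = - (a ⋅ b).
Proof.
  apply hneg_unique, hdistr. exists zero.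
  split; [apply hadd_neg | symmetry; apply hmul_0r].
Qed.

Lemma hmul_negl (a b : F) : - a ⋅ b = - (a ⋅ b).
Proof. rewrite (hmul_comm F _ b), (hmul_comm F a b). apply hmul_negr. Qed.

Lemma hmul_neq0 (a b : F) : a <> zero -> b <> zero -> a ⋅ b <> zero.
Proof.
  intros Ha Hb E. destruct (hmul_inv F Ha) as [c Hc]. apply Hb.
  rewrite <- (hmul_1l F b), <- Hc, (hmul_comm F a c), <- hmul_assoc, E.
  apply hmul_0r.
Qed.

Lemma hmul_cancel (a b x : F) : a ⋅ b = one -> a ⋅ (b ⋅ x) = x.
Proof. intros H. rewrite hmul_assoc, H. apply hmul_1l. Qed.

Lemma hpow_inv (a b : F) (k : nat) : a ⋅ b = one -> hpow F a k ⋅ hpow F b k = one.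
Proof.
  intros H. induction k as [|k IH]; simpl; [apply hmul_1l|].
  rewrite <- hmul_assoc, (hmul_comm F (hpow F b k) b), (hmul_cancel _ _ _ H).
  exact IH.
Qed.

Lemma hadd_scale (c a b x : F) : x ∈ a ⊞ b -> c ⋅ x ∈ c ⋅ a ⊞ c ⋅ b.
Proof. intros H. apply hdistr. exists x; auto. Qed.

Definition all_zero (l : list F) : Prop := Forall (fun y => y = zero) l.

Lemma all_zero_map (g : nat -> F) (s : list nat) :
  (forall k, In k s -> g k = zero) -> all_zero (map g s).
Proof.
  intros H. apply Forall_forall. intros y Hy.
  apply in_map_iff in Hy as [k [<- Hk]]. auto.
Qed.

Lemma hsum_aux_ext (l : list F) : forall S S' : F -> Prop,
  (forall x, S x <-> S' x) -> forall x, hsum_aux F S l x <-> hsum_aux F S' l x.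
Proof.
  induction l as [|a l IH]; intros S S' H x; simpl; auto.
  apply IH. intros y.
  split; intros [b [Hb1 Hb2]]; exists b; split; auto; apply H; auto.
Qed.

Lemma hsum_aux_app (l1 l2 : list F) (S : F -> Prop) :
  hsum_aux F S (l1 ++ l2) = hsum_aux F (hsum_aux F S l1) l2.
Proof. revert S. induction l1 as [|a l IH]; intros S; simpl; auto. Qed.

Lemma hsum_aux_zeros (l : list F) : all_zero l ->
  forall S x, hsum_aux F S l x <-> S x.
Proof.
  induction 1 as [|a l Ha Hl IH]; intros S x; simpl; [tauto|].
  rewrite IH. subst a. split.
  - intros [b [Hb1 Hb2]]. apply hadd_0r in Hb2. subst; auto.
  - intros Hx. exists x. split; auto. apply hadd_0r; auto.
Qed.

Lemma hsum_aux_zero_start (l : list F) (x : F) :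
  hsum_aux F (fun y => y = zero) l x <-> hsum F l x.
Proof.
  destruct l as [|a l]; simpl; [tauto|]. apply hsum_aux_ext. intros y. split.
  - intros [b [-> Hb]]. apply hadd_0l in Hb; auto.
  - intros ->. exists zero. split; auto. apply hadd_0l; auto.
Qed.

Lemma hsum_zeros_l (l1 l2 : list F) (x : F) : all_zero l1 ->
  hsum F (l1 ++ l2) x <-> hsum F l2 x.
Proof.
  intros H. revert x. induction H as [|a l Ha Hl IH]; intros x; simpl; [tauto|].
  subst a. rewrite hsum_aux_zero_start. apply IH.
Qed.

Lemma hsum_zeros_r (l1 l2 : list F) (x : F) : all_zero l2 ->
  hsum F (l1 ++ l2) x <-> hsum F l1 x.
Proof.
  intros H. destruct l1 as [|a l1]; simpl.
  - destruct H as [|b l Hb Hl]; simpl; [tauto|]. subst b.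
    rewrite hsum_aux_zeros; auto. tauto.
  - rewrite hsum_aux_app. apply hsum_aux_zeros; auto.
Qed.

Lemma hsum2 (a b x : F) : hsum F [a; b] x <-> x ∈ a ⊞ b.
Proof. simpl. split; [intros [c [-> H]]; auto | intros H; exists a; auto]. Qed.

Lemma hsum_snoc (l : list F) (y x : F) :
  hsum F (l ++ [y]) x <-> exists b, hsum F l b /\ x ∈ b ⊞ y.
Proof.
  destruct l as [|a l]; simpl.
  - split; [intros ->; exists zero; split; [|apply hadd_0l]; auto|].
    intros [b [-> H]]. apply hadd_0l in H. exact H.
  - rewrite hsum_aux_app. reflexivity.
Qed.

Lemma hsum_chain (u : nat -> F) (n : nat) (x : F) :
  hsum F (map u (seq 0 (S n))) x <->
  exists s : nat -> F,
    s 0 = u 0 /\ (forall i, i < n -> s (S i) ∈ s i ⊞ u (S i)) /\ s n = x.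
Proof.
  revert x. induction n as [|n IH]; intros x.
  - simpl. split.
    + intros ->. exists (fun _ => u 0). repeat split. intros i Hi. lia.
    + intros [s [Hs0 [_ Hsn]]]. congruence.
  - rewrite seq_S, map_app. cbn [map]. rewrite hsum_snoc. simpl. split.
    + intros [b [Hb Hx]]. apply IH in Hb as [s [Hs0 [Hs Hsn]]].
      exists (fun i => if Nat.eqb i (S n) then x else s i).
      split; [exact Hs0|]. split; [|now rewrite Nat.eqb_refl].
      intros i Hi. destruct (Nat.eqb_spec (S i) (S n)) as [E|E];
        destruct (Nat.eqb_spec i (S n)); try lia.
      * assert (i = n) by lia. subst. congruence.
      * apply Hs. lia.
    + intros [s [Hs0 [Hs Hsn]]]. exists (s n). split.
      * apply IH. exists s. repeat split; auto.
      * rewrite <- Hsn. apply Hs. lia.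
Qed.

Lemma degree_exists (q : hpoly F) :
  (exists d, has_degree q d) \/ (forall i, coef q i = zero).
Proof.
  destruct (coef_fin q) as [N HN]. revert HN.
  induction N as [|m IH]; intros HN; [right; intros i; apply HN; lia|].
  destruct (classic (coef q m = zero)) as [Hm|Hm].
  - apply IH. intros i Hi. destruct (Nat.eq_dec i m); [subst; auto | apply HN; lia].
  - left. exists m. split; [exact Hm|]. intros i Hi. apply HN; lia.
Qed.

Lemma degree_unique (q : hpoly F) (d d' : nat) :
  has_degree q d -> has_degree q d' -> d = d'.
Proof.
  intros [H1 H2] [H1' H2']. destruct (Nat.lt_trichotomy d d') as [H|[H|H]]; auto.
  - exfalso; apply H1'; auto.
  - exfalso; apply H1; auto.
Qed.

Lemma hprod_zero (p q1 q2 : hpoly F) : in_hprod p q1 q2 ->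
  (forall i, coef q1 i = zero) \/ (forall i, coef q2 i = zero) ->
  forall i, coef p i = zero.
Proof.
  intros H Hz i. specialize (H i). set (l := map _ _) in H.
  assert (Hl : all_zero l).
  { apply all_zero_map. intros k _.
    destruct Hz as [Hz|Hz]; rewrite Hz; [apply hmul_0l | apply hmul_0r]. }
  rewrite <- (app_nil_r l) in H. apply hsum_zeros_l in H; assumption.
Qed.

Lemma hprod_top_coef (p q1 q2 : hpoly F) (d1 d2 : nat) : in_hprod p q1 q2 ->
  has_degree q1 d1 -> has_degree q2 d2 -> forall m, d1 + d2 <= m ->
  coef p m = coef q1 d1 ⋅ coef q2 (m - d1).
Proof.
  intros H [_ H1] [_ H2] m Hm. specialize (H m).
  replace (S m) with (d1 + S (m - d1)) in H by lia.
  rewrite seq_app, map_app, hsum_zeros_l in H.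
  - change (seq (0 + d1) (S (m - d1))) with ([d1] ++ seq (S d1) (m - d1)) in H.
    rewrite map_app, hsum_zeros_r in H; [exact H|].
    apply all_zero_map. intros k Hk. apply in_seq in Hk. rewrite H1 by lia. apply hmul_0l.
  - apply all_zero_map. intros k Hk. apply in_seq in Hk.
    rewrite (H2 (m - k)) by lia. apply hmul_0r.
Qed.

Lemma degree_hprod (p q1 q2 : hpoly F) (d1 d2 : nat) : in_hprod p q1 q2 ->
  has_degree q1 d1 -> has_degree q2 d2 -> has_degree p (d1 + d2).
Proof.
  intros H D1 D2. split.
  - rewrite (hprod_top_coef H D1 D2) by lia. replace (d1 + d2 - d1) with d2 by lia.
    apply hmul_neq0; [apply D1 | apply D2].
  - intros i Hi. rewrite (hprod_top_coef H D1 D2) by lia.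
    rewrite (proj2 D2) by lia. apply hmul_0r.
Qed.

Lemma hprod_degrees (p q1 q2 : hpoly F) (n : nat) : in_hprod p q1 q2 ->
  has_degree p n -> exists d1 d2, has_degree q1 d1 /\ has_degree q2 d2 /\ d1 + d2 = n.
Proof.
  intros H Dp.
  destruct (degree_exists q1) as [[d1 D1]|Z1];
    [|exfalso; apply (proj1 Dp); apply (hprod_zero H); auto].
  destruct (degree_exists q2) as [[d2 D2]|Z2];
    [|exfalso; apply (proj1 Dp); apply (hprod_zero H); auto].
  exists d1, d2. split; [|split]; auto.
  exact (degree_unique (degree_hprod H D1 D2) Dp).
Qed.

Lemma hconst_degree (c : F) : c <> zero -> has_degree (hconst F c) 0.
Proof. intros Hc. split; [exact Hc|]. intros [|i] Hi; [lia | reflexivity]. Qed.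

Lemma hassoc_degree (p r : hpoly F) (d : nat) :
  hassoc p r -> has_degree r d -> has_degree p d.
Proof. intros [c [Hc H]] Dr. exact (degree_hprod H (hconst_degree Hc) Dr). Qed.

Definition linpoly (a : F) : hpoly F.
Proof.
  refine (HPoly F (fun i => match i with 0 => - a | 1 => one | _ => zero end) _).
  exists 2; intros [|[|i]] H; [lia | lia | reflexivity].
Defined.

Lemma linpoly_degree (a : F) : has_degree (linpoly a) 1.
Proof.
  split; [intros E; apply (hzero_neq_one F); symmetry; exact E|].
  intros [|[|i]] Hi; [lia | lia | reflexivity].
Qed.

(* p ∈ (f0 + f1 T) ⊡ r, written coefficientwise. *)
Definition lin_rec (p : hpoly F) (f0 f1 : F) (r : nat -> F) : Prop :=
  coef p 0 = f0 ⋅ r 0 /\ forall i, coef p (S i) ∈ f0 ⋅ r (S i) ⊞ f1 ⋅ r i.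

Lemma lin_coef (f r : hpoly F) : (forall k, 2 <= k -> coef f k = zero) ->
  forall i x,
  hsum F (map (fun k => coef f k ⋅ coef r (S i - k)) (seq 0 (S (S i)))) x <->
  x ∈ coef f 0 ⋅ coef r (S i) ⊞ coef f 1 ⋅ coef r i.
Proof.
  intros Hf i x. change (seq 0 (S (S i))) with ([0; 1] ++ seq 2 i).
  rewrite map_app, hsum_zeros_r.
  - simpl. rewrite Nat.sub_0_r. apply hsum2.
  - apply all_zero_map. intros k Hk. apply in_seq in Hk.
    rewrite Hf by lia. apply hmul_0l.
Qed.

Lemma lin_prod (p f r : hpoly F) : (forall k, 2 <= k -> coef f k = zero) ->
  in_hprod p f r <-> lin_rec p (coef f 0) (coef f 1) (coef r).
Proof.
  intros Hf. unfold in_hprod, lin_rec. split.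
  - intros H. split; [exact (H 0)|]. intros i. apply (lin_coef _ _ Hf), H.
  - intros [H0 HS] [|i]; [exact H0|]. apply (lin_coef _ _ Hf), HS.
Qed.

Lemma lin_prod_r (p f r : hpoly F) : (forall k, 2 <= k -> coef f k = zero) ->
  in_hprod p r f -> lin_rec p (coef f 0) (coef f 1) (coef r).
Proof.
  intros Hf H. split.
  - rewrite (H 0). apply hmul_comm.
  - intros i. specialize (H (S i)). unfold in_hprod in H.
    replace (S (S i)) with (i + 2) in H by lia.
    rewrite seq_app, map_app, hsum_zeros_l in H.
    + change (seq (0 + i) 2) with [i; S i] in H. cbn [map] in H.
      replace (S i - i) with 1 in H by lia. rewrite Nat.sub_diag in H.
      apply hsum2, hadd_comm in H.
      rewrite (hmul_comm F (coef f 0)), (hmul_comm F (coef f 1)). exact H.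
    + apply all_zero_map. intros k Hk. apply in_seq in Hk.
      rewrite Hf by lia. apply hmul_0r.
Qed.

Lemma hassoc_of_lin_rec (p r : hpoly F) (c : F) :
  c <> zero -> lin_rec p c zero (coef r) -> hassoc p r.
Proof.
  intros Hc H. exists c. split; [exact Hc|].
  apply lin_prod; [intros [|k] Hk; [lia | reflexivity] | exact H].
Qed.

Definition root_terms (p : hpoly F) (a : F) (i : nat) : F := coef p i ⋅ hpow F a i.

(* s is the sequence of partial sums of some branch of u_0 ⊞ u_1 ⊞ .... *)
Definition eval_chain (u s : nat -> F) : Prop :=
  s 0 = u 0 /\ forall i, s (S i) ∈ s i ⊞ u (S i).

Lemma root_chain (p : hpoly F) (a : F) :
  is_root p a <->
  exists s, eval_chain (root_terms p a) s /\ exists N, forall i, N <= i -> s i = zero.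
Proof.
  split.
  - intros [N [HN Hs]].
    assert (Hu : forall i, N <= i -> root_terms p a i = zero)
      by (intros i Hi; unfold root_terms; rewrite HN by exact Hi; apply hmul_0l).
    destruct N as [|n].
    + exists (fun _ => zero). split; [|exists 0; auto]. split.
      * symmetry; apply Hu; lia.
      * intros i. rewrite Hu by lia. apply hadd_0r. reflexivity.
    + apply hsum_chain in Hs as [s [Hs0 [Hs Hsn]]].
      set (s' := fun i => if Nat.leb i n then s i else zero).
      assert (Hz : forall i, n <= i -> s' i = zero).
      { intros i Hi. unfold s'. destruct (Nat.leb_spec i n); auto.
        replace i with n by lia. exact Hsn. }
      exists s'. split; [split|exists n; exact Hz].
      * exact Hs0.
      * intros i. destruct (Nat.le_gt_cases n i) as [Hi|Hi].
        -- rewrite (Hz (S i)), (Hz i), Hu by lia. apply hadd_0r. reflexivity.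
        -- unfold s'. rewrite (proj2 (Nat.leb_le i n)), (proj2 (Nat.leb_le (S i) n)) by lia.
           apply Hs. exact Hi.
  - intros [s [[Hs0 Hs] [N HN]]]. destruct (coef_fin p) as [M HM].
    exists (S (N + M)). split; [intros i Hi; apply HM; lia|].
    apply hsum_chain. exists s. split; [exact Hs0|]. split.
    + intros i _. apply Hs.
    + apply HN. lia.
Qed.

(* If p ∈ (f0 + f1 T) ⊡ r with f1 ≠ 0, then -f0/f1 is a root of p: the
   products f0 r_i a^i form an evaluation chain. *)
Lemma root_of_linear_factor (p r : hpoly F) (f0 f1 : F) :
  f1 <> zero -> lin_rec p f0 f1 (coef r) -> exists a, is_root p a.
Proof.
  intros Hf1 [H0 HS]. destruct (hmul_inv F Hf1) as [b Hb].
  set (a := - f0 ⋅ b).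
  assert (Haf : a ⋅ f1 = - f0).
  { unfold a. rewrite <- hmul_assoc, (hmul_comm F b f1), Hb. apply hmul_1r. }
  set (s := fun i => f0 ⋅ coef r i ⋅ hpow F a i).
  exists a. apply root_chain. exists s. split; [split|].
  - unfold s, root_terms. simpl. rewrite H0. reflexivity.
  - intros i. pose proof (hadd_scale (hpow F a (S i)) _ _ _ (HS i)) as H.
    assert (E : hpow F a (S i) ⋅ (f1 ⋅ coef r i) = - s i).
    { unfold s. simpl hpow.
      rewrite <- (hmul_assoc F (hpow F a i) a), (hmul_assoc F a f1), Haf,
        hmul_negl, hmul_negr, hmul_comm. reflexivity. }
    rewrite E in H. apply hadd_reversible in H. rewrite hneg_involutive in H.
    apply hadd_comm. unfold s, root_terms.
    rewrite (hmul_comm F (coef p (S i))), (hmul_comm F (f0 ⋅ coef r (S i))). exact H.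
  - destruct (coef_fin r) as [N HN]. exists N. intros i Hi.
    unfold s. rewrite HN, hmul_0r by exact Hi. apply hmul_0l.
Qed.

Lemma linpoly_prod (p q : hpoly F) (a : F) :
  lin_rec p (- a) one (coef q) -> in_hprod p (linpoly a) q.
Proof.
  intros H. apply lin_prod; [intros [|[|k]] Hk; [lia | lia | reflexivity] | exact H].
Qed.

(* Factor theorem at the root 0: the evaluation chain is constant, so
   c_0 = 0 and p ∈ T ⊡ (c_1 + c_2 T + ...). *)
Lemma linear_factor_of_root0 (p : hpoly F) :
  is_root p zero -> exists q, in_hprod p (linpoly zero) q.
Proof.
  intros Hr. apply root_chain in Hr as [s [[Hs0 Hs] [N HN]]].
  assert (Hconst : forall i, s i = s 0).
  { induction i as [|i IH]; auto. specialize (Hs i). unfold root_terms in Hs.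
    simpl in Hs. rewrite !hmul_0r in Hs. apply hadd_0r in Hs. congruence. }
  assert (Hp0 : coef p 0 = zero).
  { rewrite <- (hmul_1r (coef p 0)). change one with (hpow F zero 0).
    change (coef p 0 ⋅ hpow F zero 0) with (root_terms p zero 0).
    rewrite <- Hs0, <- (Hconst N). apply HN. lia. }
  destruct (coef_fin p) as [M HM].
  assert (Hq : forall k, M <= k -> coef p (S k) = zero) by (intros k Hk; apply HM; lia).
  exists (HPoly F (fun k => coef p (S k)) (ex_intro _ M Hq)).
  apply linpoly_prod. rewrite hneg_0. split; cbn [coef].
  - rewrite hmul_0l. exact Hp0.
  - intros i. rewrite hmul_0l, hmul_1l. apply hadd_0l. reflexivity.
Qed.

(* Factor theorem at a root a ≠ 0: for an evaluation chain s, the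
   cofactor is q_k = -s_k a^-(k+1); reversibility turns
   s_(i+1) ∈ s_i ⊞ c_(i+1) a^(i+1) into the recursion for (T - a) ⊡ q. *)
Lemma linear_factor_of_unit_root (p : hpoly F) (a : F) :
  a <> zero -> is_root p a -> exists q, in_hprod p (linpoly a) q.
Proof.
  intros Ha Hr. apply root_chain in Hr as [s [[Hs0 Hs] [N HN]]].
  unfold root_terms in *. destruct (hmul_inv F Ha) as [b Hb].
  set (d := fun k => - s k ⋅ hpow F b (S k)).
  assert (Hd : forall k, N <= k -> d k = zero)
    by (intros k Hk; unfold d; rewrite HN, hneg_0 by exact Hk; apply hmul_0l).
  exists (HPoly F d (ex_intro _ N Hd)). apply linpoly_prod. split; cbn [coef].
  - unfold d. rewrite hmul_negl, hmul_negl, hmul_negr, hneg_involutive. cbn [hpow].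
    rewrite hmul_1l, (hmul_comm F (s 0)), (hmul_cancel _ _ _ Hb), Hs0.
    symmetry; apply hmul_1r.
  - intros i. specialize (Hs i). apply hadd_comm, hadd_reversible in Hs.
    apply (hadd_scale (hpow F b (S i))) in Hs.
    rewrite (hmul_comm F (coef p (S i))), hmul_assoc, (hmul_comm F _ (hpow F a (S i))),
      hpow_inv, hmul_1l in Hs by exact Hb.
    set (B := hpow F b (S i)) in Hs.
    assert (E : - a ⋅ d (S i) = B ⋅ s (S i)).
    { unfold d. rewrite hmul_negl, hmul_negl, hmul_negr, hneg_involutive.
      change (hpow F b (S (S i))) with (B ⋅ b).
      rewrite (hmul_comm F (s (S i))), (hmul_comm F B b), <- (hmul_assoc F b B).
      apply (hmul_cancel _ _ _ Hb). }
    rewrite E, hmul_1l. unfold d. fold B. rewrite (hmul_comm F (- s i)).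
    exact Hs.
Qed.

Lemma linear_factor_of_root (p : hpoly F) (a : F) :
  is_root p a -> exists q, in_hprod p (linpoly a) q.
Proof.
  destruct (classic (a = zero)) as [->|Ha].
  - apply linear_factor_of_root0.
  - apply linear_factor_of_unit_root, Ha.
Qed.

(* In degree n ≥ 2 a root splits off a linear factor whose degree and
   cofactor degree are both below n, so p cannot be irreducible. *)
Lemma no_root_of_irreducible (p : hpoly F) (n : nat) :
  2 <= n -> has_degree p n -> hirreducible p -> ~ exists a, is_root p a.
Proof.
  intros Hn Dp [_ Hirr] [a Ha].
  destruct (linear_factor_of_root Ha) as [q Hq].
  destruct (hprod_degrees Hq Dp) as [d1 [d2 [D1 [D2 Hd]]]].
  rewrite (degree_unique D1 (linpoly_degree a)) in Hd.
  destruct (Hirr _ _ Hq) as [Hs|Hs].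
  - pose proof (degree_unique (hassoc_degree Hs (linpoly_degree a)) Dp). lia.
  - pose proof (degree_unique (hassoc_degree Hs D2) Dp). lia.
Qed.

Lemma small_factor_assoc_or_root (p f r : hpoly F) (d : nat) :
  has_degree f d -> d <= 1 -> lin_rec p (coef f 0) (coef f 1) (coef r) ->
  hassoc p r \/ exists a, is_root p a.
Proof.
  intros [Hlead Hhi] Hd Hrec. destruct d as [|[|d]]; [left | right | lia].
  - rewrite (Hhi 1) in Hrec by lia. eapply hassoc_of_lin_rec; eassumption.
  - eapply root_of_linear_factor; eassumption.
Qed.

(* In degree 1 ≤ n ≤ 3 every factorisation has a factor of degree ≤ 1. *)
Lemma irreducible_of_no_root (p : hpoly F) (n : nat) :
  1 <= n <= 3 -> has_degree p n -> ~ (exists a, is_root p a) -> hirreducible p.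
Proof.
  intros Hn Dp Hnr. split; [exists n; split; [lia | exact Dp]|].
  intros q1 q2 H. destruct (hprod_degrees H Dp) as [d1 [d2 [D1 [D2 Hd]]]].
  destruct (Nat.le_gt_cases d1 1) as [Hd1|Hd1].
  - apply lin_prod in H; [|intros k Hk; apply D1; lia].
    destruct (small_factor_assoc_or_root _ D1 Hd1 H) as [Hs|Hs]; [now right | contradiction].
  - apply lin_prod_r in H; [|intros k Hk; apply D2; lia].
    destruct (small_factor_assoc_or_root _ D2 ltac:(lia) H) as [Hs|Hs]; [now left | contradiction].
Qed.

End HyperfieldPolynomials.

Theorem mainTheorem4 (F : Hyperfield) (p : hpoly F) :
  (has_degree p 2 \/ has_degree p 3) ->
  (hirreducible p <-> ~ (exists a : F, is_root p a)).
Proof.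
  intros Hd. assert (Hn : exists n, 2 <= n <= 3 /\ has_degree p n)
    by (destruct Hd as [D|D]; [exists 2 | exists 3]; split; auto; lia).
  destruct Hn as [n [Hn Dp]]. split.
  - apply (no_root_of_irreducible (n := n)); [lia | exact Dp].
  - apply (irreducible_of_no_root (n := n)); [lia | exact Dp].
Qed.
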